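(* Let $k,n$ be integers with $k\geq 4$ and $n\geq 1$. (1) If $4\leq k\leq 2^{\mathrm{R}_3(\mathcal{B}_n)+n}$, then $\mathrm{GR}_k(\mathcal{B}_2:\mathcal{B}_n)\leq \mathrm{R}_3(\mathcal{B}_n)+n$. (2) If $k>2^{\mathrm{R}_3(\mathcal{B}_n)+n}$, then the pair $(\mathcal{B}_2,\mathcal{B}_n)$ is $(\mathcal{B}_2:\mathcal{B}_n)_k$-good.
   Context: $\mathcal{B}_N$ denotes the Boolean lattice of all subsets of $[N]$ ordered by inclusion. An induced copy of a poset $\mathcal{P}$ in a poset $\mathcal{Q}$ is the image of an injection $f:\mathcal{P}\to\mathcal{Q}$ with $f(X)\le f(Y)$ iff $X\le Y$. A $k$-coloring of $\mathcal{B}_N$ is exact if it uses colors from $[k]$ and every color is used. Monochromatic: all sets share a color; rainbow: pairwise distinct colors. $\mathrm{R}_k(\mathcal{P})$ (Boolean Ramsey number) is the smallest $n$ such that every coloring of $\mathcal{B}_n$ with $k$ colors contains a monochromatic induced copy of $\mathcal{P}$. The pair $(\mathcal{Q},\mathcal{P})$ is $(\mathcal{Q}:\mathcal{P})_k$-good if for every positive integer $N$, every exact $k$-coloring of $\mathcal{B}_N$ contains a rainbow induced copy of $\mathcal{Q}$ or a monochromatic induced copy of $\mathcal{P}$. For a pair that is not good, $\mathrm{GR}_k(\mathcal{Q}:\mathcal{P})$ is the smallest integer $n$ such that for every $N\ge n$, every exact $k$-coloring of $\mathcal{B}_N$ contains a rainbow induced copy of $\mathcal{Q}$ or a monochromatic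 induced copy of $\mathcal{P}$. *)

From mathcomp Require Import all_boot.
Set Implicit Arguments. Unset Strict Implicit. Unset Printing Implicit Defensive.

(* The Boolean lattice B_N is modelled as {set 'I_N} ordered by \subset. *)
Definition BL (N : nat) := {set 'I_N}.

Definition induced_copy (m N : nat) (f : BL m -> BL N) : Prop :=
  injective f /\ forall X Y : BL m, (f X \subset f Y) = (X \subset Y).

Definition coloring (k N : nat) := BL N -> 'I_k.

Definition exact_coloring (k N : nat) (c : coloring k N) : Prop :=
  forall i : 'I_k, exists X : BL N, c X = i.

Definition has_mono_copy (k N m : nat) (c : coloring k N) : Prop :=
  exists f : BL m -> BL N, induced_copy f /\
    forall X Y : BL m, c (f X) = c (f Y).

Definition has_rainbow_copy (k N m : nat) (c : coloring k N) : Prop :=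
  exists f : BL m -> BL N, induced_copy f /\
    forall X Y : BL m, c (f X) = c (f Y) -> X = Y.

Definition ramsey_prop (k m N : nat) : Prop :=
  forall c : coloring k N, has_mono_copy m c.

Definition is_bool_ramsey (k m r : nat) : Prop :=
  ramsey_prop k m r /\ forall r', ramsey_prop k m r' -> r <= r'.

Definition gr_prop (k q p N : nat) : Prop :=
  forall c : coloring k N, exact_coloring c ->
    has_rainbow_copy q c \/ has_mono_copy p c.

Definition good (k q p : nat) : Prop :=
  forall N, 0 < N -> gr_prop k q p N.

(* GR_k(B_q : B_p) <= m, i.e. m belongs to the (upward closed) set whose
   minimum is GR_k: the property holds for every N >= m. *)
Definition GR_le (k q p m : nat) : Prop :=
  forall N, m <= N -> gr_prop k q p N.

(** Suppose B_N has no rainbow copy of B_2, and take a set D with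
    c D <> c(empty) and |D| > R_3(B_n).  Among the subsets of D whose colour
    differs from both of these, one X of least size (if any) leaves only
    three colours on the subsets of D minus a point of X: a subset W of it
    with a fourth colour would be incomparable with X, and empty, W, X, D
    would be a rainbow B_2.  So the Ramsey property gives a monochromatic B_n
    inside.  If no such D exists, every set of size > R_3(B_n) has the colour
    of the empty set, and the sets X ∪ P, with P the complement of n fixed
    points, together with the empty set form a monochromatic B_n.  This works
    for every colouring of B_N with N >= R_3(B_n) + n; exactness only matters
    in part (2), where it forces 2^N >= k > 2^(R_3(B_n)+n). *)

From mathcomp Require Import all_boot.
From Stdlib Require Import Classical.

Set Implicit Arguments. Unset Strict Implicit. Unset Printing Implicit Defensive.

Lemma induced_copyP (m N : nat) (f : BL m -> BL N) :
  (forall X Y : BL m, (f X \subset f Y) = (X \subset Y)) -> induced_copy f.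
Proof.
move=> fS; split=> // X Y fXY; apply/eqP.
by rewrite eqEsubset -!fS fXY subxx.
Qed.

Lemma induced_copy_comp (m p N : nat) (f : BL m -> BL p) (g : BL p -> BL N) :
  induced_copy f -> induced_copy g -> induced_copy (g \o f).
Proof. by move=> [_ fS] [_ gS]; apply: induced_copyP => X Y /=; rewrite gS fS. Qed.

Lemma imset_subset_inj (T U : finType) (h : T -> U) (X Y : {set T}) :
  injective h -> (h @: X \subset h @: Y) = (X \subset Y).
Proof.
move=> h_inj; apply/idP/idP; last exact: imsetS.
move=> /subsetP hXY; apply/subsetP => x xX.
by rewrite -(mem_imset _ _ h_inj) hXY ?(mem_imset _ _ h_inj).
Qed.

Lemma imset_induced_copy (m N : nat) (h : 'I_m -> 'I_N) :
  injective h -> induced_copy (fun X : BL m => h @: X).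
Proof. by move=> h_inj; apply: induced_copyP => X Y; apply: imset_subset_inj. Qed.

Lemma subcube_induced_copy (m N : nat) (D : BL N) : m <= #|D| ->
  exists2 g : BL m -> BL N, induced_copy g & forall X, g X \subset D.
Proof.
move=> mD; pose h (i : 'I_m) : 'I_N := enum_val (widen_ord mD i).
have h_inj : injective h.
  by move=> i j /enum_val_inj /(congr1 val) /= /ord_inj.
exists (fun X : BL m => h @: X); first exact: imset_induced_copy.
by move=> X; apply/subsetP => _ /imsetP [i _ ->]; apply: enum_valP.
Qed.

Lemma I2_cases (i : 'I_2) : i = ord0 \/ i = ord_max.
Proof. by case: i => -[|[|//]] i_lt; [left | right]; apply: val_inj. Qed.

Lemma subset_I2 (Z Z' : BL 2) : (Z \subset Z') =
  ((ord0 \in Z) ==> (ord0 \in Z')) && ((ord_max \in Z) ==> (ord_max \in Z')).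
Proof.
apply/subsetP/andP => [ZZ' | [/implyP ZZ'0 /implyP ZZ'1] i].
  by split; apply/implyP; apply: ZZ'.
by case: (I2_cases i) => ->.
Qed.

Lemma eq_set_I2 (Z Z' : BL 2) :
  (ord0 \in Z) = (ord0 \in Z') -> (ord_max \in Z) = (ord_max \in Z') -> Z = Z'.
Proof. by move=> eq0 eq1; apply/setP => i; case: (I2_cases i) => ->. Qed.

Section Colorings.

Variables (k N : nat) (c : coloring k N).

Lemma mono_copy_of_palette (n r : nat) (D : BL N) (s : seq 'I_k) :
  r <= #|D| -> (forall W : BL N, W \subset D -> c W \in s) ->
  ramsey_prop (size s) n r -> has_mono_copy n c.
Proof.
move=> rD palette ramsey.
have [g g_copy gD] := subcube_induced_copy rD.
have in_s X : c (g X) \in s by apply: palette.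
pose c' (X : BL r) : 'I_(size s) := Ordinal (etrans (index_mem _ _) (in_s X)).
have [f [f_copy f_mono]] := ramsey c'.
exists (g \o f); split; first exact: induced_copy_comp.
move=> X Y /=; have /(congr1 val) /= same_index := f_mono X Y.
by rewrite -(nth_index (c set0) (in_s (f X))) same_index nth_index.
Qed.

Lemma rainbow_diamond (A W X D : BL N) :
  A \subset W -> A \subset X -> W \subset D -> X \subset D ->
  ~~ (W \subset X) -> ~~ (X \subset W) -> uniq [:: c A; c W; c X; c D] ->
  has_rainbow_copy 2 c.
Proof.
move=> AW AX WD XD WX XW colors.
have WA : ~~ (W \subset A) by apply: contra WX => WA; apply: subset_trans WA AX.
have XA : ~~ (X \subset A) by apply: contra XW => XA; apply: subset_trans XA AW.
have DA : ~~ (D \subset A) by apply: contra WA => DA; apply: subset_trans WD DA.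
have DW : ~~ (D \subset W) by apply: contra XW => DW; apply: subset_trans XD DW.
have DX : ~~ (D \subset X) by apply: contra WX => DX; apply: subset_trans WD DX.
have AD : A \subset D := subset_trans AW WD.
pose f (Z : BL 2) := if ord0 \in Z then (if ord_max \in Z then D else W)
                     else (if ord_max \in Z then X else A).
have f_copy : induced_copy f.
  apply: induced_copyP => Z Z'; rewrite subset_I2 /f.
  by case: (ord0 \in Z); case: (ord_max \in Z); case: (ord0 \in Z');
    case: (ord_max \in Z'); rewrite /= ?subxx //; apply/negbTE.
exists f; split=> // Z Z'; rewrite /f => same_color.
suff [] : (ord0 \in Z) = (ord0 \in Z') /\ (ord_max \in Z) = (ord_max \in Z').
  exact: eq_set_I2.
move: same_color.
by case: (ord0 \in Z); case: (ord_max \in Z); case: (ord0 \in Z');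
  case: (ord_max \in Z') => // same_color;
  rewrite same_color /= !inE !eqxx ?orbT ?andbF in colors.
Qed.

Lemma mono_copy_of_large_sets_colored_empty (n r : nat) :
  r + n <= N -> (forall D : BL N, r < #|D| -> c D = c set0) -> has_mono_copy n c.
Proof.
move=> rnN large_empty.
have nN : n <= N := leq_trans (leq_addl r n) rnN.
pose E (i : 'I_n) : 'I_N := widen_ord nN i.
have E_inj : injective E by move=> i j /(congr1 val) /= /ord_inj.
pose P : BL N := ~: (E @: setT).
have P_card : r <= #|P|.
  have := cardsC (E @: setT); rewrite -/P card_imset // cardsT !card_ord => card_N.
  by rewrite -(leq_add2r n) [#|P| + n]addnC card_N.
have EP i : E i \notin P by rewrite inE negbK imset_f ?inE.
pose f (X : BL n) : BL N := if X == set0 then set0 else E @: X :|: P.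
have f_copy : induced_copy f.
  apply: induced_copyP => X Y; rewrite /f.
  have [->|X0] := eqVneq X set0; first by rewrite !sub0set.
  have /set0Pn [i iX] := X0.
  have [->|_] := eqVneq Y set0.
    rewrite !subset0 (negbTE X0); apply/negbTE/set0Pn.
    by exists (E i); rewrite inE imset_f.
  apply/idP/idP => [/subsetP fXY|XY]; last by apply: setSU; apply: imsetS.
  apply/subsetP => j jX; rewrite -(mem_imset _ _ E_inj).
  have : E j \in E @: Y :|: P by apply: fXY; rewrite inE imset_f.
  by rewrite inE (negbTE (EP j)) orbF.
have f_color X : c (f X) = c set0.
  rewrite /f; have [//|/set0Pn [i iX]] := eqVneq X set0; apply: large_empty.
  apply: leq_ltn_trans P_card (proper_card _); apply/properP; split; first exact: subsetUr.
  by exists (E i); rewrite ?inE ?imset_f.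
by exists f; split=> // X Y; rewrite !f_color.
Qed.

Section WithoutRainbowB2.

Hypothesis no_rainbow : ~ has_rainbow_copy 2 c.
Variable D : BL N.

Definition off_palette (W : BL N) := [&& W \subset D, c W != c set0 & c W != c D].

Lemma palette_below_least_off_palette (X : BL N) (l : 'I_N) :
  c D != c set0 -> off_palette X -> (forall W, off_palette W -> #|X| <= #|W|) ->
  l \in X -> forall W : BL N, W \subset D :\ l -> c W \in [:: c set0; c D; c X].
Proof.
move=> cD offX X_least lX W WDl.
have WD : W \subset D := subset_trans WDl (subsetDl D [set l]).
apply/negPn/negP; rewrite !inE !negb_or => /and3P [W0 WD' WX].
have nXW : ~~ (X \subset W).
  by apply: contraTN lX => /subsetP XW; apply/negP => /XW /(subsetP WDl); rewrite setD11.
have nWX : ~~ (W \subset X).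
  apply: contra WX => WX; have /eqP -> // : W == X.
  by rewrite eqEcard WX X_least // /off_palette WD W0 WD'.
case/and3P: offX => XD X0 XD'.
apply: no_rainbow; apply: (rainbow_diamond (sub0set W) (sub0set X) WD XD nWX nXW).
by rewrite /= !inE !negb_or !(eq_sym (c set0)) W0 X0 cD WX WD' XD'.
Qed.

Lemma mono_copy_below_large_top (n r : nat) :
  ramsey_prop 3 n r -> r < #|D| -> c D != c set0 -> has_mono_copy n c.
Proof.
move=> ramsey rD cD.
have card_Dl l : l \in D -> r <= #|D :\ l| by move=> lD; move: rD; rewrite (cardsD1 l D) lD.
have [W0 offW0 | no_off] := pickP off_palette.
  have [X offX X_least] := arg_minnP (fun W : BL N => #|W|) offW0.
  have /set0Pn [l lX] : X != set0.
    by apply: contraTneq offX => ->; rewrite /off_palette eqxx andbF.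
  apply: (@mono_copy_of_palette n r (D :\ l) [:: c set0; c D; c X]) => //.
    by apply: card_Dl; case/and3P: offX => /subsetP XD _ _; apply: XD.
  exact: palette_below_least_off_palette.
have /set0Pn [l lD] : D != set0 by rewrite -card_gt0 (leq_ltn_trans _ rD).
apply: (@mono_copy_of_palette n r (D :\ l) [:: c set0; c D; c D]) => // [|W WDl].
  exact: card_Dl.
have := no_off W; rewrite /off_palette (subset_trans WDl (subsetDl _ _)) /=.
by rewrite !inE => /negbT; rewrite negb_and !negbK => /orP [] ->; rewrite ?orbT.
Qed.

End WithoutRainbowB2.

Lemma rainbow_B2_or_mono_copy (n r : nat) :
  ramsey_prop 3 n r -> r + n <= N -> has_rainbow_copy 2 c \/ has_mono_copy n c.
Proof.
move=> ramsey rnN; have [|no_rainbow] := classic (has_rainbow_copy 2 c); [by left | right].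
case: (pickP (fun D : BL N => (r < #|D|) && (c D != c set0))) => [D /andP [rD cD] | large_empty].
  exact: mono_copy_below_large_top ramsey rD cD.
apply: (mono_copy_of_large_sets_colored_empty rnN) => D rD.
by apply/eqP; move: (large_empty D); rewrite rD => /negbT; rewrite negbK.
Qed.

Lemma exact_coloring_le : exact_coloring c -> k <= 2 ^ N.
Proof.
move=> onto.
have -> : 2 ^ N = #|[set: BL N]| by rewrite -powersetT card_powerset cardsT card_ord.
apply: leq_trans (leq_image_card c [set: BL N]); rewrite -{1}[k]card_ord.
apply/subset_leq_card/subsetP => i _.
by have [X <-] := onto i; apply: image_f.
Qed.

End Colorings.

Theorem theorem1p4 (k n r : nat) :
  4 <= k -> 1 <= n -> is_bool_ramsey 3 n r ->
  (k <= 2 ^ (r + n) -> GR_le k 2 n (r + n)) /\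
  (2 ^ (r + n) < k -> good k 2 n).
Proof.
move=> _ _ [ramsey _]; split=> [_ N rnN c _ | k_large N _ c onto].
  exact: rainbow_B2_or_mono_copy ramsey rnN.
apply: rainbow_B2_or_mono_copy ramsey _.
have : 2 ^ (r + n) < 2 ^ N := leq_trans k_large (exact_coloring_le onto).
by rewrite ltn_exp2l // => /ltnW.
Qed.
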